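(* Let $\mathcal Z$ be a finite zero-set, let $R_{a,b}\subseteq\mathcal Z$ with $a,b\ge1$, and let $Y$ be a nonempty Young diagram with $Y\subseteq R_{a-1,b-1}$. Then $$\gamma(\mathcal Z)\ge\frac12\min_{(k,\ell)\in\partial_oY}\Big(kb+\ell a-k\ell+\gamma(\mathcal Z^{\downarrow\ell})+\gamma(\mathcal Z^{\leftarrow k})\Big).$$
   Context: $\mathbb Z_+=\{0,1,2,\dots\}$, $R_{a,b}=([0,a-1]\times[0,b-1])\cap\mathbb Z_+^2$; a zero-set is a union of such rectangles (a finite one is a Young diagram). $\mathrm{row}(x,A),\mathrm{col}(x,A)$ count points of $A$ on the horizontal/vertical line through $x$; $\mathcal T(A)=A\cup\{x\notin A:(\mathrm{row}(x,A),\mathrm{col}(x,A))\notin\mathcal Z\}$; $A$ spans if $\bigcup_t\mathcal T^t(A)=\mathbb Z_+^2$; $\gamma(\mathcal Z)$ is the minimal size of a finite spanning set (with $\gamma(\emptyset)=0$). For integers $k\ge0$: $\mathcal Z^{\downarrow k}=\{(u,v-k):(u,v)\in\mathcal Z,v\ge k\}$ and $\mathcal Z^{\leftarrow k}=\{(u-k,v):(u,v)\in\mathcal Z,u\ge k\}$. The outer boundary is $\partial_oY=\{(u,v)\in\mathbb Z_+^2\setminus Y:(u-1,v)\in Y\text{ or }(u,v-1)\in Y\}$. *)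

From mathcomp Require Import all_boot.
From Stdlib Require Import ClassicalEpsilon.
Set Implicit Arguments. Unset Strict Implicit. Unset Printing Implicit Defensive.

Definition pt := (nat * nat)%type.
Definition pset := pt -> Prop.

Definition rect (a b : nat) : pset := fun p => p.1 < a /\ p.2 < b.

Definition included (A B : pset) : Prop := forall p, A p -> B p.

(* zero-set: a union of rectangles R_{a,b}, i.e. every point of Z lies in
   some rectangle contained in Z (and rectangles contained in Z are in Z). *)
Definition zero_set (Z : pset) : Prop :=
  forall p, Z p <-> exists a b, included (rect a b) Z /\ rect a b p.

Definition finite_set (A : pset) : Prop := exists s : seq pt, forall p, A p -> p \in s.

Definition young (Y : pset) : Prop := zero_set Y /\ finite_set Y.

Definition card_is (P : pset) (n : nat) : Prop :=
  exists s : seq pt, uniq s /\ size s = n /\ forall p, P p <-> p \in s.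

Definition row_pts (A : pset) (x : pt) : pset := fun y => A y /\ y.2 = x.2.
Definition col_pts (A : pset) (x : pt) : pset := fun y => A y /\ y.1 = x.1.

(* (row(x,A), col(x,A)) \in Z ; an infinite count is never in Z *)
Definition counts_in (Z A : pset) (x : pt) : Prop :=
  exists u v, Z (u, v) /\ card_is (row_pts A x) u /\ card_is (col_pts A x) v.

Definition T (Z A : pset) : pset :=
  fun x => A x \/ (~ A x /\ ~ counts_in Z A x).

Fixpoint Titer (Z : pset) (t : nat) (A : pset) : pset :=
  match t with 0 => A | t'.+1 => T Z (Titer Z t' A) end.

Definition spans (Z A : pset) : Prop := forall x, exists t, Titer Z t A x.

Definition set_of (s : seq pt) : pset := fun p => p \in s.

Definition is_gamma (Z : pset) (g : nat) : Prop :=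
  (exists s : seq pt, uniq s /\ size s = g /\ spans Z (set_of s)) /\
  (forall s : seq pt, uniq s -> spans Z (set_of s) -> g <= size s).

(* gamma(Z): the (unique) such g; junk value only if no finite spanning set exists *)
Definition gamma (Z : pset) : nat := epsilon (inhabits 0) (is_gamma Z).

Definition shift_down (Z : pset) (k : nat) : pset := fun p => Z (p.1, p.2 + k).
Definition shift_left (Z : pset) (k : nat) : pset := fun p => Z (p.1 + k, p.2).

Definition outer_boundary (Y : pset) : pset :=
  fun p => ~ Y p /\ ((0 < p.1 /\ Y (p.1.-1, p.2)) \/ (0 < p.2 /\ Y (p.1, p.2.-1))).

From Pilot Require Import Defs.
From mathcomp Require Import all_boot zify.
From Stdlib Require Import ClassicalEpsilon FunctionalExtensionality PropExtensionality Classical.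
Set Implicit Arguments. Unset Strict Implicit. Unset Printing Implicit Defensive.

(* Fix a minimum spanning set A. Call a row heavy for a set of chosen lines
   if A, together with the crossings of the row with the chosen columns, has
   at least a points on it (a column: at least b points).  Adding heavy lines
   one at a time never gets stuck: otherwise A plus the chosen lines would be
   closed under T, although A spans.  So the numbers (k, l) of chosen columns
   and rows leave Y through its outer boundary.  A row chosen after k columns
   covers at least a - k new points of A, a column chosen after l rows at
   least b - l, so the lines cover at least kb + la - kl points of A.  Deleting
   the l rows (resp. k columns) from A leaves a spanning set of Z shifted down
   by l (resp. left by k), and these two sets together have at most 2|A|
   points minus the covered ones. *)

Definition downclosed (Z : pset) : Prop :=
  forall u v u' v', Z (u, v) -> u' <= u -> v' <= v -> Z (u', v').

Lemma zero_set_downclosed Z : zero_set Z -> downclosed Z.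
Proof.
move=> HZ u v u' v' /HZ[a [b [sub_ab [/= ua vb]]]] le_u le_v.
by apply: sub_ab; split=> /=; lia.
Qed.

Lemma downclosed_shift_down Z n : downclosed Z -> downclosed (shift_down Z n).
Proof. by move=> HZ u v u' v' Zuv le_u le_v; apply: (HZ _ _ _ _ Zuv) => /=; lia. Qed.

Lemma exists_notin (s : seq nat) : exists n, n \notin s.
Proof.
exists (\max_(i <- s) i).+1; apply/negP => /(@leq_bigmax_seq _ s xpredT id _)/(_ isT).
by rewrite ltnn.
Qed.

Lemma finite_bounded (A : pset) :
  finite_set A -> exists M, forall p, A p -> p.1 < M /\ p.2 < M.
Proof.
move=> [s As]; exists (\max_(p <- s) maxn p.1 p.2).+1 => p /As p_s.
have := @leq_bigmax_seq _ s xpredT (fun p : pt => maxn p.1 p.2) p p_s isT.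
by rewrite !ltnS geq_max => /andP[-> ->].
Qed.

Definition decb (P : Prop) : bool := if excluded_middle_informative P then true else false.

Lemma decbP (P : Prop) : decb P <-> P.
Proof. by rewrite /decb; case: excluded_middle_informative. Qed.

Lemma card_is_sub (P : pset) (s : seq pt) :
  (forall p, P p -> p \in s) -> exists2 n, card_is P n & n <= size s.
Proof.
move=> Ps; exists (size (undup [seq p <- s | decb (P p)])).
  exists (undup [seq p <- s | decb (P p)]); split; first exact: undup_uniq.
  split=> // p; rewrite mem_undup mem_filter; split=> [Pp|/andP[/decbP //]].
  by rewrite Ps // andbT; apply/decbP.
by rewrite (leq_trans (size_undup _)) // size_filter count_size.
Qed.

Lemma card_is_ge (P : pset) n (s : seq pt) :
  card_is P n -> uniq s -> (forall p, p \in s -> P p) -> size s <= n.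
Proof. by move=> [s' [_ [<- HP]]] s_uniq sP; apply: uniq_leq_size => // p /sP/HP. Qed.

Lemma card_is_ext (P P' : pset) n : (forall p, P p <-> P' p) -> card_is P n -> card_is P' n.
Proof.
by move=> PP' [s [s_uniq [s_size HP]]]; exists s; do 2!split=> //; move=> p; rewrite -PP'.
Qed.

Lemma gammaP Z (s : seq pt) : uniq s -> spans Z (Defs.set_of s) -> is_gamma Z (gamma Z).
Proof.
move=> s_uniq s_spans; apply: epsilon_spec.
pose P n := decb (exists s', uniq s' /\ size s' = n /\ spans Z (Defs.set_of s')).
have exP : exists n, P n by exists (size s); apply/decbP; exists s.
case: (ex_minnP exP) => g /decbP Pg g_min; exists g; split=> // s' s'_uniq s'_spans.
by apply: g_min; apply/decbP; exists s'.
Qed.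

Lemma gamma_le Z (s : seq pt) : uniq s -> spans Z (Defs.set_of s) -> gamma Z <= size s.
Proof. by move=> s_uniq s_spans; apply: (proj2 (gammaP s_uniq s_spans)). Qed.

(* Every point of the square [0, M)^2 is present, so every other point sees
   M points in its row (at time 0) or in its column (at time 1); no point of a
   zero set inside that square has such a coordinate. *)
Lemma finite_zero_set_spanned Z :
  finite_set Z -> exists s : seq pt, uniq s /\ spans Z (Defs.set_of s).
Proof.
move=> /finite_bounded[M ZM].
pose sq := [seq (i, j) | i <- iota 0 M, j <- iota 0 M].
have mem_sq u v : ((u, v) \in sq) = (u < M) && (v < M).
  apply/allpairsP/andP => [[[i j] [/= + + [-> ->]]]|[uM vM]].
    by rewrite !mem_iota.
  by exists (u, v); rewrite !mem_iota.
have line_uniq (f : nat -> pt) : injective f -> uniq [seq f i | i <- iota 0 M].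
  by move=> f_inj; rewrite map_inj_uniq ?iota_uniq.
have low_rows u j : j < M -> Titer Z 1 (Defs.set_of sq) (u, j).
  move=> jM /=; case: (ltnP u M) => uM; first by left; rewrite /Defs.set_of mem_sq uM jM.
  right; split; first by rewrite /Defs.set_of mem_sq ltnNge uM.
  move=> [n1 [n2 [Zn [row_n1 _]]]]; have [n1M _] := ZM _ Zn.
  suff: M <= n1 by rewrite leqNgt n1M.
  rewrite -{1}(size_iota 0 M) -(size_map (fun i => (i, j))).
  apply: (card_is_ge row_n1); first by apply: line_uniq => x y [].
  by move=> p /mapP[i + ->]; rewrite mem_iota /= => iM; split=> //; rewrite /Defs.set_of mem_sq iM.
exists sq; split; first by apply: allpairs_uniq; rewrite ?iota_uniq // => -[? ?] [? ?].
move=> [u v]; exists 2 => /=.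
case: (classic (Titer Z 1 (Defs.set_of sq) (u, v))) => [|not_uv]; [by left | right; split=> //].
move=> [n1 [n2 [Zn [_ col_n2]]]]; have [_ n2M] := ZM _ Zn.
suff: M <= n2 by rewrite leqNgt n2M.
rewrite -{1}(size_iota 0 M) -(size_map (fun j => (u, j))).
apply: (card_is_ge col_n2); first by apply: line_uniq => x y [].
by move=> p /mapP[j + ->]; rewrite mem_iota /= => jM; split=> //; apply: low_rows.
Qed.

Definition delete_row (r : nat) (A : seq pt) : seq pt :=
  [seq (p.1, unbump r p.2) | p <- A & p.2 != r].

Lemma delete_row_uniq r A : uniq A -> uniq (delete_row r A).
Proof.
move=> A_uniq; rewrite map_inj_in_uniq ?filter_uniq // => -[x1 y1] [x2 y2].
rewrite !mem_filter /= => /andP[y1r _] /andP[y2r _] [-> E].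
by rewrite -(unbumpK y1r) -(unbumpK y2r) E.
Qed.

(* The point (u, w) of the new grid corresponds to (u, bump r w); a column
   loses at most the point on row r, which the shifted zero set accounts for. *)
Lemma spans_delete_row Z A r : downclosed Z -> spans Z (Defs.set_of A) ->
  spans (shift_down Z 1) (Defs.set_of (delete_row r A)).
Proof.
move=> HZ A_spans.
pose A' := Defs.set_of (delete_row r A).
suff Tbump t u w : Titer Z t (Defs.set_of A) (u, bump r w) -> Titer (shift_down Z 1) t A' (u, w).
  by move=> [u w]; have [t At] := A_spans (u, bump r w); exists t; apply: Tbump.
elim: t u w => [|t IH] u w /=.
  move=> Auw; apply/mapP; exists (u, bump r w); last by rewrite /= bumpK.
  by rewrite mem_filter eq_sym neq_bump.
case=> [/IH|[_ not_counts]]; [by left | ].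
case: (classic (Titer (shift_down Z 1) t A' (u, w))) => [|not_uw]; [by left | right; split=> //].
move=> [n1 [n2 [Zn [[s1 [_ [n1E row_s1]]] [s2 [_ [n2E col_s2]]]]]]].
subst n1 n2; apply: not_counts.
pose At := Titer Z t (Defs.set_of A).
have row_sub q : row_pts At (u, bump r w) q -> q \in [seq (p.1, bump r p.2) | p <- s1].
  case: q => x y [Axy /= yE]; subst y; apply/mapP; exists (x, w) => //.
  by apply/row_s1; split=> //; apply: IH.
have col_sub q : col_pts At (u, bump r w) q -> q \in (u, r) :: [seq (p.1, bump r p.2) | p <- s2].
  case: q => x y [Axy /= xE]; subst x.
  rewrite in_cons; case: (eqVneq y r) => [-> | yr]; first by rewrite eqxx.
  apply/orP; right; apply/mapP; exists (u, unbump r y); last by rewrite /= unbumpK.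
  by apply/col_s2; split=> //; apply: IH; rewrite unbumpK.
have [m1 row_m1 m1_le] := card_is_sub row_sub.
have [m2 col_m2 m2_le] := card_is_sub col_sub.
rewrite size_map in m1_le; rewrite /= size_map in m2_le.
exists m1, m2; split; last by split.
by apply: (HZ _ _ _ _ Zn) => //=; rewrite addn1.
Qed.

Lemma shift_down_add Z m n : shift_down (shift_down Z m) n = shift_down Z (n + m).
Proof. by apply: functional_extensionality => -[x y]; rewrite /shift_down /= addnA. Qed.

Lemma spans_delete_rows Z (R : seq nat) (A : seq pt) :
  downclosed Z -> uniq R -> uniq A -> spans Z (Defs.set_of A) ->
  exists B : seq pt, [/\ uniq B, size B = count (fun p : pt => p.2 \notin R) A
                       & spans (shift_down Z (size R)) (Defs.set_of B)].
Proof.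
move Rn : (size R) => n; elim: n R Z A Rn => [|n IH] [|r R] //= Z A Rn HZ R_uniq A_uniq A_spans.
  exists A; split=> //; rewrite (_ : shift_down Z 0 = Z) //.
  by apply: functional_extensionality => -[x y]; rewrite /shift_down addn0.
case/andP: R_uniq => rR R_uniq; case: Rn => Rn.
have R'_uniq : uniq (map (unbump r) R).
  rewrite map_inj_in_uniq // => y1 y2 y1R y2R E.
  have y1r : y1 != r by apply: contraNneq rR => <-.
  have y2r : y2 != r by apply: contraNneq rR => <-.
  by rewrite -(unbumpK y1r) -(unbumpK y2r) E.
subst n; have [B [B_uniq B_size B_spans]] := IH _ _ _ (size_map _ _)
  (downclosed_shift_down (n := 1) HZ) R'_uniq (delete_row_uniq r A_uniq)
  (spans_delete_row r HZ A_spans).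
exists B; split=> //; last by rewrite shift_down_add addn1 in B_spans.
rewrite B_size /delete_row count_map count_filter; apply: eq_count => -[x y] /=.
rewrite in_cons; case: (eqVneq y r) => [-> | yr] /=; first by rewrite andbF.
have memR : (unbump r y \in map (unbump r) R) = (y \in R).
  apply/mapP/idP => [[z zR E]|]; last by exists y.
  have zr : z != r by apply: contraNneq rR => <-.
  by rewrite -(unbumpK yr) E unbumpK.
by rewrite memR andbT.
Qed.

Definition transpose (p : pt) : pt := (p.2, p.1).
Definition transpose_set (P : pset) : pset := fun p => P (transpose p).

Lemma transposeK : involutive transpose. Proof. by case. Qed.

Lemma card_is_transpose (P : pset) n : card_is (transpose_set P) n <-> card_is P n.
Proof.
suff card_tr (Q : pset) : card_is Q n -> card_is (transpose_set Q) n.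
  split=> [/card_tr|/card_tr //]; apply: card_is_ext => p.
  by rewrite /transpose_set transposeK.
move=> [s [s_uniq [s_size HQ]]]; exists (map transpose s); split.
  by rewrite map_inj_uniq //; apply: inv_inj transposeK.
rewrite size_map; split=> // p.
by rewrite /transpose_set HQ -{2}(transposeK p) mem_map //; apply: inv_inj transposeK.
Qed.

Lemma counts_in_transpose Z (P : pset) x :
  counts_in (transpose_set Z) (transpose_set P) x <-> counts_in Z P (transpose x).
Proof.
split=> -[u [v [Zuv [row_u col_v]]]]; exists v, u; do 2!split=> //.
- exact: (card_is_transpose (row_pts P (transpose x)) v).1 col_v.
- exact: (card_is_transpose (col_pts P (transpose x)) u).1 row_u.
- exact: (card_is_transpose (col_pts P (transpose x)) v).2 col_v.
- exact: (card_is_transpose (row_pts P (transpose x)) u).2 row_u.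
Qed.

Lemma Titer_transpose Z (P : pset) t :
  Titer (transpose_set Z) t (transpose_set P) = transpose_set (Titer Z t P).
Proof.
elim: t => [//|t IH] /=; rewrite IH; apply: functional_extensionality => x.
by apply: propositional_extensionality; rewrite /Defs.T counts_in_transpose.
Qed.

Lemma spans_transpose Z (A : seq pt) :
  spans Z (Defs.set_of A) -> spans (transpose_set Z) (Defs.set_of (map transpose A)).
Proof.
move=> A_spans x; have [t At] := A_spans (transpose x); exists t.
rewrite (_ : Defs.set_of _ = transpose_set (Defs.set_of A)) ?Titer_transpose //.
apply: functional_extensionality => p; apply: propositional_extensionality.
by rewrite /Defs.set_of /transpose_set -{1}(transposeK p) mem_map //; apply: inv_inj transposeK.
Qed.

Lemma spans_delete_cols Z (C : seq nat) (A : seq pt) :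
  downclosed Z -> uniq C -> uniq A -> spans Z (Defs.set_of A) ->
  exists B : seq pt, [/\ uniq B, size B = count (fun p : pt => p.1 \notin C) A
                       & spans (shift_left Z (size C)) (Defs.set_of B)].
Proof.
move=> HZ C_uniq A_uniq /spans_transpose A_spans.
have tr_inj : injective transpose by apply: inv_inj transposeK.
have HZt : downclosed (transpose_set Z) by move=> u v u' v' Zvu le_u le_v; apply: (HZ v u).
have [B [B_uniq B_size B_spans]] :=
  spans_delete_rows HZt C_uniq (etrans (map_inj_uniq tr_inj A) A_uniq) A_spans.
exists (map transpose B); split; first by rewrite map_inj_uniq.
  by rewrite size_map B_size count_map.
exact: spans_transpose B_spans.
Qed.

Lemma count_predU_predD (T : Type) (P Q : pred T) (s : seq T) :
  count (predU P Q) s = count Q s + count (predD P Q) s.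
Proof. by elim: s => //= x s ->; case: (P x); case: (Q x); rewrite /= ?addnS ?addnA. Qed.

Lemma count_predC_predU (T : Type) (P Q : pred T) (s : seq T) :
  count (fun x => ~~ P x) s + count (fun x => ~~ Q x) s + count (fun x => P x || Q x) s
  <= 2 * size s.
Proof.
have UI : count (fun x => P x || Q x) s + count (fun x => P x && Q x) s = count P s + count Q s.
  exact: count_predUI.
have CP : count P s + count (fun x => ~~ P x) s = size s by apply: count_predC.
have CQ : count Q s + count (fun x => ~~ Q x) s = size s by apply: count_predC.
lia.
Qed.

(* [(true, r)] is the row [r] and [(false, c)] the column [c]. *)
Definition line := (bool * nat)%type.

Definition on_line (x : line) (p : pt) : bool := if x.1 then p.2 == x.2 else p.1 == x.2.

Definition meet (x y : line) : pt := if x.1 then (y.2, x.2) else (x.2, y.2).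

Definition covered (ch : seq line) (p : pt) : bool := has (on_line^~ p) ch.

Definition rows (ch : seq line) : seq nat := [seq x.2 | x <- ch & x.1].
Definition cols (ch : seq line) : seq nat := [seq x.2 | x <- ch & ~~ x.1].

Definition position (ch : seq line) : pt := (size (cols ch), size (rows ch)).

Definition line_pts (A : seq pt) (ch : seq line) (x : line) : seq pt :=
  undup ([seq p <- A | on_line x p] ++ [seq meet x y | y <- ch & y.1 != x.1]).

Fixpoint heavy_chain (A : seq pt) (a b : nat) (ch : seq line) : Prop :=
  if ch is x :: ch' then
    [/\ heavy_chain A a b ch', x \notin ch' & (if x.1 then a else b) <= size (line_pts A ch' x)]
  else True.

Lemma coveredE ch p : covered ch p = (p.2 \in rows ch) || (p.1 \in cols ch).
Proof.
elim: ch => //= -[[] n] ch IH; rewrite /rows /cols /= -/(rows ch) -/(cols ch) IH /on_line /=.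
  by rewrite in_cons orbA.
by rewrite in_cons orbCA.
Qed.

Lemma size_chain ch : size ch = size (cols ch) + size (rows ch).
Proof. by rewrite !size_map !size_filter addnC count_predC. Qed.

Lemma position_cons x ch :
  position (x :: ch) = if x.1 then ((position ch).1, (position ch).2.+1)
                       else ((position ch).1.+1, (position ch).2).
Proof. by case: x => [[] n]. Qed.

Lemma on_line_cross x y p :
  y != x -> on_line x p -> on_line y p -> y.1 != x.1 /\ p = meet x y.
Proof.
case: x y p => [[] m] [[] n] [u v]; rewrite /on_line /meet /= => yx /eqP-> /eqP E; subst.
all: by rewrite ?eqxx in yx *.
Qed.

Lemma size_line_pts A ch x : x \notin ch ->
  size (line_pts A ch x)
  <= count (predD (on_line x) (covered ch)) A + count (fun y => y.1 != x.1) ch.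
Proof.
move=> x_ch; rewrite -!size_filter -(size_map (meet x) [seq y <- ch | _]) -size_cat.
apply: uniq_leq_size; first exact: undup_uniq.
move=> p; rewrite mem_undup !mem_cat => /orP[|->]; last by rewrite orbT.
rewrite !mem_filter => /andP[x_p pA]; case cov: (covered ch p); last by rewrite /= cov x_p pA.
have [y y_ch y_p] := hasP cov; have yx : y != x by apply: contraNneq x_ch => <-.
have [yx1 ->] := on_line_cross yx x_p y_p.
by apply/orP; right; apply: map_f; rewrite mem_filter y_ch yx1.
Qed.

Lemma count_perpendicular (x : line) (ch : seq line) :
  count (fun y : line => y.1 != x.1) ch = if x.1 then size (cols ch) else size (rows ch).
Proof. by rewrite !size_map !size_filter; case: x => [[] n]; apply: eq_count => -[[] m]. Qed.

Lemma heavy_chain_count A a b ch : heavy_chain A a b ch ->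
  size (cols ch) * b + size (rows ch) * a <= count (covered ch) A + size (cols ch) * size (rows ch).
Proof.
elim: ch => //= x ch IH [/IH count_ch x_ch heavy_x].
have cover_cons : count (covered (x :: ch)) A
                  = count (covered ch) A + count (predD (on_line x) (covered ch)) A.
  exact: count_predU_predD.
have := size_line_pts A x_ch; rewrite count_perpendicular cover_cons.
by case: x heavy_x {x_ch cover_cons} => [[] n] /= heavy_x;
  rewrite /rows /cols /= -/(rows ch) -/(cols ch) /=; nia.
Qed.

Lemma heavy_chain_uniq A a b ch : heavy_chain A a b ch -> uniq (rows ch) /\ uniq (cols ch).
Proof.
suff uniq_ch : heavy_chain A a b ch -> uniq ch.
  move=> /uniq_ch ch_uniq; split; rewrite map_inj_in_uniq ?filter_uniq //.
    by move=> [[] m] [[] n]; rewrite !mem_filter //= => _ _ ->.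
  by move=> [[] m] [[] n]; rewrite !mem_filter //= => _ _ ->.
by elim: ch => //= x ch IH [/IH -> ->].
Qed.

Lemma line_pts_sub (A : seq pt) (ch : seq line) (x : line) (p q : pt) :
  ~~ covered ch p -> on_line x p -> on_line x q -> (q \in A) || covered ch q ->
  q \in line_pts A ch x.
Proof.
move=> p_free x_p x_q; rewrite mem_undup mem_cat => /orP[qA|/hasP[y y_ch y_q]].
  by rewrite mem_filter x_q qA.
have yx : y != x by apply: contraNneq p_free => yx; apply/hasP; exists y => //; rewrite yx.
have [yx1 ->] := on_line_cross yx x_q y_q.
by apply/orP; right; apply: map_f; rewrite mem_filter y_ch yx1.
Qed.

(* A maximal heavy chain yields a set, [A] plus its lines, that [T] cannot
   enlarge: every point outside it sees fewer than [a] points in its row and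
   fewer than [b] points in its column. *)
Lemma heavy_chain_extendable Z A a b ch : included (rect a b) Z -> spans Z (Defs.set_of A) ->
  heavy_chain A a b ch -> exists x, heavy_chain A a b (x :: ch).
Proof.
move=> rect_Z A_spans chain; apply: NNPP => no_ext.
have light x : x \notin ch -> size (line_pts A ch x) < (if x.1 then a else b).
  by move=> x_ch; rewrite ltnNge; apply/negP => heavy; apply: no_ext; exists x.
pose O p := (p \in A) || covered ch p.
have closed t p : Titer Z t (Defs.set_of A) p -> O p.
  elim: t p => [|t IH] p /=; first by rewrite /O => ->.
  case=> [/IH //|[_ not_counts]]; apply/idPn => /norP[_ p_free]; apply: not_counts.
  have off_ch x : on_line x p -> x \notin ch.
    by move=> x_p; apply: contra p_free => x_ch; apply/hasP; exists x.
  have x_p : on_line (true, p.2) p by rewrite /on_line /=.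
  have y_p : on_line (false, p.1) p by rewrite /on_line /=.
  have [n1 row_n1 n1_le] : exists2 n, card_is (row_pts (Titer Z t (Defs.set_of A)) p) n
                                    & n <= size (line_pts A ch (true, p.2)).
    by apply: card_is_sub => q [/IH Oq q2]; apply: line_pts_sub p_free x_p _ Oq; apply/eqP.
  have [n2 col_n2 n2_le] : exists2 n, card_is (col_pts (Titer Z t (Defs.set_of A)) p) n
                                    & n <= size (line_pts A ch (false, p.1)).
    by apply: card_is_sub => q [/IH Oq q1]; apply: line_pts_sub p_free y_p _ Oq; apply/eqP.
  exists n1, n2; split=> //; apply: rect_Z; split=> /=.
    exact: leq_ltn_trans n1_le (light _ (off_ch _ x_p)).
  exact: leq_ltn_trans n2_le (light _ (off_ch _ y_p)).
have [m m_fresh] := exists_notin (cols ch ++ map fst A).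
have [n n_fresh] := exists_notin (rows ch).
have [t At] := A_spans (m, n); move: (closed _ _ At).
move: m_fresh; rewrite mem_cat negb_or => /andP[m_cols mA].
rewrite /O coveredE /= (negbTE n_fresh) (negbTE m_cols) !orbF.
by move=> /(map_f fst) mA'; rewrite mA' in mA.
Qed.

Lemma chain_exits_diagram (P : seq line -> Prop) (Y : pset) N :
  (forall ch, P ch -> exists x, P (x :: ch)) -> (forall p, Y p -> p.1 + p.2 < N) ->
  forall ch, P ch -> Y (position ch) -> exists ch', P ch' /\ outer_boundary Y (position ch').
Proof.
move=> extend Y_bounded ch; have [n] := ubnP (N - size ch); elim: n ch => // n IH ch.
move=> size_ch P_ch Y_ch; have [x P_xch] := extend _ P_ch.
have ch_N : size ch < N by rewrite size_chain; apply: Y_bounded Y_ch.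
case: (classic (Y (position (x :: ch)))) => [Y_xch | not_Y]; last first.
  exists (x :: ch); split=> //; split=> //; rewrite position_cons.
  by case: x.1; [right | left].
by apply: IH P_xch Y_xch; rewrite /= subnS; lia.
Qed.

Lemma zero_set_origin Y p : zero_set Y -> Y p -> Y (0, 0).
Proof. by case: p => u v /zero_set_downclosed Y_down Yuv; apply: Y_down Yuv _ _. Qed.

Theorem mainTheorem9 (Z : pset) (a b : nat) (Y : pset) :
  zero_set Z -> finite_set Z ->
  1 <= a -> 1 <= b -> included (rect a b) Z ->
  young Y -> (exists p, Y p) -> included Y (rect (a - 1) (b - 1)) ->
  exists k l, outer_boundary Y (k, l) /\
    k * b + l * a - k * l + gamma (shift_down Z l) + gamma (shift_left Z k)
      <= 2 * gamma Z.
Proof.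
move=> Z_zero Z_fin _ _ rect_Z [Y_zero _] [p Yp] Y_rect.
have Z_down := zero_set_downclosed Z_zero.
have [s [s_uniq s_spans]] := finite_zero_set_spanned Z_fin.
have [[A [A_uniq [A_size A_spans]]] _] := gammaP s_uniq s_spans.
have [ch [chain boundary]] : exists ch, heavy_chain A a b ch /\ outer_boundary Y (position ch).
  apply: (@chain_exits_diagram _ _ (a + b) _ _ [::]) => //.
  - by move=> ch; apply: heavy_chain_extendable rect_Z A_spans.
  - by move=> q /Y_rect [? ?]; lia.
  - exact: zero_set_origin Y_zero Yp.
exists (size (cols ch)), (size (rows ch)); split=> //.
have [rows_uniq cols_uniq] := heavy_chain_uniq chain.
have [B1 [B1_uniq B1_size B1_spans]] := spans_delete_rows Z_down rows_uniq A_uniq A_spans.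
have [B2 [B2_uniq B2_size B2_spans]] := spans_delete_cols Z_down cols_uniq A_uniq A_spans.
have := gamma_le B1_uniq B1_spans; have := gamma_le B2_uniq B2_spans.
have := heavy_chain_count chain; rewrite (eq_count (coveredE ch)).
have := count_predC_predU (fun p : pt => p.2 \in rows ch) (fun p : pt => p.1 \in cols ch) A.
rewrite -A_size B1_size B2_size; lia.
Qed.
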